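(* Let $d\ge2$ and let $O_+$ be the operator on $(\mathbb{C}^d)^{\otimes3}$ given by $O_+=\sum_{\vec a\in\mathbb{Z}_d^3}O_+(\vec a)|\vec a\rangle\langle\vec a|$ with $O_+(\vec a)=1+(-d)^{wt(\vec a)-1}$. Define $Q_3=O_+^2$; $Q_4=\sum_{\vec a\in\mathbb{Z}_d^4}O_+(a_1a_2a_3)O_+(a_1a_2a_4)|\vec a\rangle\langle\vec a|$; $Q_5=\sum_{\vec a\in\mathbb{Z}_d^5}O_+(a_1a_2a_3)O_+(a_1a_4a_5)|\vec a\rangle\langle\vec a|$; $Q_6=O_+\otimes O_+=\sum_{\vec a\in\mathbb{Z}_d^6}O_+(a_1a_2a_3)O_+(a_4a_5a_6)|\vec a\rangle\langle\vec a|$. Then for each $t\in\{3,4,5,6\}$ there exists $d_0$ such that for all $d\ge d_0$ and every conjugacy class $\xi$ of $S_t$, $\sum_{\pi\in\xi}\mathrm{Tr}[W_\pi Q_t]>0$.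
   Context: For a 3-dit string $\vec a=(a_1,a_2,a_3)$, $wt(\vec a)$ is the largest number of equal entries: $wt=1$ if all entries are distinct, $wt=2$ if exactly two coincide, $wt=3$ if all three coincide; so $O_+(\vec a)$ equals $2$, $1-d$, $1+d^2$ respectively. $O_+(a_ia_ja_k)$ means $O_+$ evaluated on the string $(a_i,a_j,a_k)$. $W_\pi$ ($\pi\in S_t$) is the permutation operator on $(\mathbb{C}^d)^{\otimes t}$ permuting tensor factors. *)

From HB Require Import structures.
From mathcomp Require Import all_boot all_order all_algebra all_fingroup.
Set Implicit Arguments. Unset Strict Implicit. Unset Printing Implicit Defensive.
Import Order.TTheory GRing.Theory Num.Theory.
Local Open Scope ring_scope.

(* Operators on (C^d)^{\otimes t} are represented by their matrices in the
   computational basis |a>, a : {ffun 'I_t -> 'I_d} (a_i = a (i-1)).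
   All matrices involved have integer entries, so we work over int. *)
Definition kmx (T : finType) := T -> T -> int.

Definition kmul (T : finType) (A B : kmx T) : kmx T :=
  fun x y => \sum_(z : T) A x z * B z y.

Definition ktrace (T : finType) (A : kmx T) : int := \sum_(x : T) A x x.

Definition kdiag (T : finType) (q : T -> int) : kmx T :=
  fun x y => (x == y)%:R * q x.

Definition Wperm (t d : nat) (pi : {perm 'I_t}) : kmx {ffun 'I_t -> 'I_d} :=
  fun x y => (x == [ffun i => y ((pi^-1)%g i)])%:R.

Definition wt3 (d : nat) (x y z : 'I_d) : nat :=
  if (x == y) && (y == z) then 3%N
  else if [|| x == y, y == z | x == z] then 2%N else 1%N.

Definition Oplus (d : nat) (x y z : 'I_d) : int :=
  1 + (- (d%:Z)) ^+ (wt3 x y z).-1.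

(* a_k for a 1-based index k *)
Definition ent (t d : nat) (a : {ffun 'I_t.+1 -> 'I_d}) (k : nat) : 'I_d :=
  a (inord k.-1).

Definition q3 (d : nat) (a : {ffun 'I_3 -> 'I_d}) : int :=
  (Oplus (ent a 1) (ent a 2) (ent a 3)) ^+ 2.
Definition q4 (d : nat) (a : {ffun 'I_4 -> 'I_d}) : int :=
  Oplus (ent a 1) (ent a 2) (ent a 3) * Oplus (ent a 1) (ent a 2) (ent a 4).
Definition q5 (d : nat) (a : {ffun 'I_5 -> 'I_d}) : int :=
  Oplus (ent a 1) (ent a 2) (ent a 3) * Oplus (ent a 1) (ent a 4) (ent a 5).
Definition q6 (d : nat) (a : {ffun 'I_6 -> 'I_d}) : int :=
  Oplus (ent a 1) (ent a 2) (ent a 3) * Oplus (ent a 4) (ent a 5) (ent a 6).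

Definition Qop (t d : nat) (q : {ffun 'I_t -> 'I_d} -> int) :=
  kdiag q.

Definition class_sums_eventually_pos (t : nat)
    (q : forall d : nat, {ffun 'I_t -> 'I_d} -> int) : Prop :=
  exists d0 : nat, forall d : nat, (d0 <= d)%N -> (2 <= d)%N ->
    forall xi : {set {perm 'I_t}}, xi \in classes [set: {perm 'I_t}] ->
      0 < \sum_(pi in xi) ktrace (kmul (@Wperm t d pi) (Qop (q d))).

(* For a single permutation pi, Tr[W_pi Q_t] is the sum of Q_t(a) over the
   strings a fixed by pi. Both Q_t(a) and the condition that pi fixes a depend
   only on which entries of a coincide, i.e. on the set partition of the t
   positions induced by a, and a partition with k blocks is realised by
   d (d - 1) ... (d - k + 1) strings. Hence each trace is an integer polynomial
   in d. For every pi in S_t (t <= 6) this polynomial, written in the variable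
   d - 2, has nonnegative coefficients and a positive constant term, as checked
   by computation; so every single trace, and a fortiori every class sum, is
   positive for all d >= 2. *)

From HB Require Import structures.
From Stdlib Require Import ZArith.
From mathcomp Require Import all_boot all_order all_algebra all_fingroup.
From mathcomp Require Import ssrZ ring.
Set Implicit Arguments. Unset Strict Implicit. Unset Printing Implicit Defensive.
Import Order.TTheory GRing.Theory Num.Theory.

Section MapInjectiveIn.
Variables (T1 T2 : eqType) (f : T1 -> T2).

Lemma mem_map_in s x : {in x :: s &, injective f} -> (f x \in map f s) = (x \in s).
Proof.
move=> inj_f; apply/mapP/idP => [[y s_y fxy] | s_x]; last by exists x.
by rewrite (inj_f x y) ?mem_head ?inE ?s_y ?orbT.
Qed.

Lemma undup_map_in s : {in s &, injective f} -> undup (map f s) = map f (undup s).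
Proof.
elim: s => //= x s IHs inj_f; rewrite mem_map_in // IHs //.
  by case: (x \in s).
by apply: sub_in2 inj_f => y; apply: predU1r.
Qed.

Lemma index_map_in s x :
  {in s &, injective f} -> x \in s -> index (f x) (map f s) = index x s.
Proof.
elim: s => //= y s IHs inj_f; rewrite inE /index /= => /predU1P[-> | s_x].
  by rewrite !eqxx.
rewrite (inj_in_eq inj_f) ?mem_head ?inE ?s_x ?orbT //; congr (if _ then _ else _.+1).
by apply: IHs s_x; apply: sub_in2 inj_f => z; apply: predU1r.
Qed.

Lemma eq_nth_map_in x0 y0 s i j : {in s &, injective f} -> i < size s -> j < size s ->
  (nth y0 (map f s) i == nth y0 (map f s) j) = (nth x0 s i == nth x0 s j).
Proof. by move=> inj_f ? ?; rewrite !(nth_map x0) // (inj_in_eq inj_f) ?mem_nth. Qed.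

End MapInjectiveIn.

(* The restricted growth string of the set partition of the positions of [s]
   induced by equality of entries: values are renamed 0, 1, ... in order of
   first occurrence. *)
Definition rgs (s : seq nat) : seq nat := [seq index v (undup s) | v <- s].

Lemma size_rgs s : size (rgs s) = size s.
Proof. exact: size_map. Qed.

Lemma index_undup_inj (s : seq nat) : {in s &, injective (index^~ (undup s))}.
Proof. by move=> v w s_v s_w; apply: (index_inj 0); rewrite mem_undup. Qed.

Lemma rgs_map f s : {in s &, injective f} -> rgs (map f s) = rgs s.
Proof.
move=> inj_f; rewrite /rgs undup_map_in // -map_comp; apply/eq_in_map => v s_v /=.
by apply: index_map_in; rewrite ?mem_undup //; apply: sub_in2 inj_f => w; rewrite mem_undup.
Qed.

Lemma nth_rgs_eq s i j : i < size s -> j < size s ->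
  (nth 0 (rgs s) i == nth 0 (rgs s) j) = (nth 0 s i == nth 0 s j).
Proof. exact/eq_nth_map_in/index_undup_inj. Qed.

Lemma eq_rgs s s' : size s = size s' ->
  (forall i j, i < size s -> j < size s ->
     (nth 0 s i == nth 0 s j) = (nth 0 s' i == nth 0 s' j)) ->
  rgs s' = rgs s.
Proof.
move=> eq_size eq_pat; pose f v := nth 0 s' (index v s).
have inj_f : {in s &, injective f}.
  by move=> v w s_v s_w /eqP; rewrite /f -eq_pat ?index_mem // !nth_index // => /eqP.
suff -> : s' = map f s by apply: rgs_map.
apply: (@eq_from_nth _ 0) => [|i]; rewrite ?size_map // -eq_size => lt_i.
by rewrite (nth_map 0) //; apply/eqP; rewrite /f -eq_pat ?index_mem ?nth_index ?mem_nth.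
Qed.

Lemma rgs_idem s : rgs (rgs s) = rgs s.
Proof. exact/rgs_map/index_undup_inj. Qed.

Lemma rgs_lt s v : v \in rgs s -> v < size s.
Proof.
by case/mapP => w s_w ->; apply: leq_trans (size_undup s); rewrite index_mem mem_undup.
Qed.

Lemma map_index_uniq (u : seq nat) : uniq u -> map (index^~ u) u = iota 0 (size u).
Proof.
move=> u_uniq; apply: (@eq_from_nth _ 0) => [|i]; rewrite size_map ?size_iota // => lt_i.
by rewrite (nth_map 0) // index_uniq // nth_iota.
Qed.

Lemma undup_rgs_fixed r : rgs r = r -> undup r = iota 0 (size (undup r)).
Proof.
move=> r_rgs; rewrite -{1}r_rgs /rgs undup_map_in; last exact: index_undup_inj.
by rewrite map_index_uniq // undup_uniq.
Qed.

Fixpoint bounded_seqs (n m : nat) : seq (seq nat) :=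
  if n is n'.+1 then [seq v :: r | v <- iota 0 m, r <- bounded_seqs n' m] else [:: [::]].

Lemma mem_bounded_seqs n m r :
  (r \in bounded_seqs n m) = (size r == n) && all (fun v => v < m) r.
Proof.
elim: n r => [|n IHn] [|v r] //=.
  by apply/allpairsP => -[[a b] [_ _]].
apply/allpairsP/idP => [[[w s] [/= w_m s_seqs [-> ->]]] | /and3P[size_r v_m r_m]].
  by move: w_m s_seqs; rewrite mem_iota IHn => /= -> /andP[/eqP -> ->]; rewrite eqxx.
by exists (v, r); rewrite /= mem_iota IHn -eqSS size_r.
Qed.

Lemma uniq_bounded_seqs n m : uniq (bounded_seqs n m).
Proof.
elim: n => [|n IHn] //=; apply: allpairs_uniq => //; first exact: iota_uniq.
by move=> [a b] [c e] _ _ [-> ->].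
Qed.

Definition rgs_seqs t : seq (seq nat) := [seq r <- bounded_seqs t t | rgs r == r].

Lemma uniq_rgs_seqs t : uniq (rgs_seqs t).
Proof. exact/filter_uniq/uniq_bounded_seqs. Qed.

Lemma mem_rgs_seqs t r : (r \in rgs_seqs t) = (size r == t) && (rgs r == r).
Proof.
rewrite mem_filter mem_bounded_seqs andbCA.
apply/andP/andP => [[-> /andP[-> _]] // | [/eqP size_r r_rgs]].
rewrite size_r eqxx r_rgs; split=> //; apply/allP => v.
by rewrite -(eqP r_rgs) => /rgs_lt; rewrite size_r.
Qed.

Definition natseq t d (x : {ffun 'I_t -> 'I_d}) : seq nat := [seq val (x i) | i <- enum 'I_t].

Lemma size_natseq t d (x : {ffun 'I_t -> 'I_d}) : size (natseq x) = t.
Proof. by rewrite size_map size_enum_ord. Qed.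

Lemma nth_natseq t d (x : {ffun 'I_t -> 'I_d}) (i : 'I_t) : nth 0 (natseq x) i = x i.
Proof. by rewrite (nth_map i) ?size_enum_ord // nth_ord_enum. Qed.

Section RgsFiber.
Variables (t d : nat) (r : seq nat).
Hypotheses (size_r : size r = t) (r_rgs : rgs r = r).

Let k := size (undup r).

Lemma mem_rgs_fixed v : (v \in r) = (v < k).
Proof. by rewrite -mem_undup (undup_rgs_fixed r_rgs) mem_iota. Qed.

Lemma block_of_lt (i : 'I_t) : nth 0 r i < k.
Proof. by rewrite -mem_rgs_fixed mem_nth // size_r. Qed.

Lemma rep_lt (j : 'I_k) : index (val j) r < t.
Proof. by rewrite -size_r index_mem mem_rgs_fixed ltn_ord. Qed.

Definition block_of (i : 'I_t) : 'I_k := Ordinal (block_of_lt i).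
Definition block_rep (j : 'I_k) : 'I_t := Ordinal (rep_lt j).

Lemma block_repK : cancel block_rep block_of.
Proof. by move=> j; apply: val_inj; rewrite /= nth_index // mem_rgs_fixed. Qed.

Lemma rgs_fiber_eq (x : {ffun 'I_t -> 'I_d}) i i' :
  rgs (natseq x) = r -> (x i == x i') = (block_of i == block_of i').
Proof.
move=> x_r; rewrite -[RHS]/(nth 0 r i == nth 0 r i').
by rewrite -x_r nth_rgs_eq ?size_natseq // !nth_natseq.
Qed.

Lemma card_rgs_fiber : #|[set x : {ffun 'I_t -> 'I_d} | rgs (natseq x) == r]| = d ^_ k.
Proof.
pose lift (g : {ffun 'I_k -> 'I_d}) : {ffun 'I_t -> 'I_d} := [ffun i => g (block_of i)].
have lift_inj : injective lift.
  move=> g g' /ffunP eq_g; apply/ffunP => j.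
  by have := eq_g (block_rep j); rewrite !ffunE block_repK.
have -> : d ^_ k = #|[set g : {ffun 'I_k -> 'I_d} | injectiveb g]|.
  by rewrite card_inj_ffuns !card_ord.
rewrite -(card_imset _ lift_inj); apply: eq_card => x.
rewrite inE; apply/eqP/imsetP => [x_r | [g]].
  exists [ffun j => x (block_rep j)].
    rewrite inE; apply/injectiveP => j j'; rewrite !ffunE => /eqP.
    by rewrite rgs_fiber_eq // !block_repK => /eqP.
  by apply/ffunP => i; rewrite !ffunE; apply/eqP; rewrite rgs_fiber_eq // block_repK.
rewrite inE => /injectiveP inj_g ->; rewrite -[RHS]r_rgs; apply: eq_rgs.
  by rewrite size_natseq.
move=> i j; rewrite size_r => lt_i lt_j.
rewrite -[i]/(val (Ordinal lt_i)) -[j]/(val (Ordinal lt_j)) !nth_natseq !ffunE.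
by rewrite val_eqE (inj_eq inj_g).
Qed.

End RgsFiber.

Definition fixed_by (l r : seq nat) : bool :=
  all (fun i => nth 0 r i == nth 0 r (nth 0 l i)) (iota 0 (size l)).

Definition perm_natseq t (pi : {perm 'I_t}) : seq nat := natseq [ffun i => (pi^-1)%g i].

Lemma perm_natseq_perm_eq t (pi : {perm 'I_t}) : perm_eq (perm_natseq pi) (iota 0 t).
Proof.
apply: uniq_perm; rewrite ?iota_uniq //.
  rewrite map_inj_uniq ?enum_uniq // => i j; rewrite !ffunE => /val_inj; exact: perm_inj.
move=> v; rewrite mem_iota /=; apply/mapP/idP => [[i _ ->] | lt_v].
  by rewrite ffunE ltn_ord.
by exists (pi (Ordinal lt_v)); rewrite ?mem_enum // ffunE permK.
Qed.

Lemma fixed_by_natseq t d (pi : {perm 'I_t}) (x : {ffun 'I_t -> 'I_d}) :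
  (x == [ffun i => x ((pi^-1)%g i)]) = fixed_by (perm_natseq pi) (natseq x).
Proof.
rewrite /fixed_by size_natseq; apply/eqP/allP => [x_fix i | x_fix].
  rewrite mem_iota add0n => /= lt_i; rewrite -[i]/(val (Ordinal lt_i)).
  by rewrite /perm_natseq !nth_natseq ffunE {1}x_fix ffunE.
apply/ffunP => i; rewrite ffunE; apply/val_inj => /=.
have /eqP : nth 0 (natseq x) i == nth 0 (natseq x) (nth 0 (perm_natseq pi) i).
  by apply: x_fix; rewrite mem_iota /=.
by rewrite /perm_natseq !nth_natseq ffunE.
Qed.

Lemma fixed_by_map l r f : perm_eq l (iota 0 (size r)) -> {in r &, injective f} ->
  fixed_by l (map f r) = fixed_by l r.
Proof.
move=> l_perm inj_f; have size_l : size l = size r by rewrite (perm_size l_perm) size_iota.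
apply: eq_in_all => i; rewrite mem_iota size_l => /= lt_i.
have lt_li : nth 0 l i < size r.
  by rewrite -[_ < _](mem_iota 0) -(perm_mem l_perm) mem_nth ?size_l.
exact: eq_nth_map_in.
Qed.

Definition wt3n (x y z : nat) : nat :=
  if (x == y) && (y == z) then 3 else if [|| x == y, y == z | x == z] then 2 else 1.

Definition positions_lt n (A : nat * nat * nat) : bool := [&& A.1.1 < n, A.1.2 < n & A.2 < n].

Definition wt_at (r : seq nat) (A : nat * nat * nat) : nat :=
  wt3n (nth 0 r A.1.1) (nth 0 r A.1.2) (nth 0 r A.2).

Lemma wt_at_map r f A : positions_lt (size r) A -> {in r &, injective f} ->
  wt_at (map f r) A = wt_at r A.
Proof. by case/and3P => *; rewrite /wt_at /wt3n !(eq_nth_map_in 0). Qed.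

Lemma nth_natseq_inord n d (x : {ffun 'I_n.+1 -> 'I_d}) k :
  k <= n -> nth 0 (natseq x) k = x (inord k).
Proof. by move=> le_k; rewrite -{1}(inordK le_k) nth_natseq. Qed.

Local Open Scope ring_scope.

Definition relabel_invariant t (F : seq nat -> int) : Prop :=
  forall r f, size r = t -> {in r &, injective f} -> F (map f r) = F r.

Lemma sum_ffun_rgs t d (F : seq nat -> int) : relabel_invariant t F ->
  \sum_(x : {ffun 'I_t -> 'I_d}) F (natseq x) =
  \sum_(r <- rgs_seqs t) F r * (d ^_ size (undup r))%:R.
Proof.
move=> F_inv.
have F_rgs (x : {ffun 'I_t -> 'I_d}) :
    F (natseq x) = \sum_(r <- rgs_seqs t | r == rgs (natseq x)) F r.
  rewrite -big_filter filter_pred1_uniq ?uniq_rgs_seqs //; last first.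
    by rewrite mem_rgs_seqs size_rgs size_natseq eqxx rgs_idem eqxx.
  by rewrite big_seq1 /rgs F_inv ?size_natseq //; apply: index_undup_inj.
rewrite (eq_bigr _ (fun x _ => F_rgs x)) (exchange_big_dep xpredT) //=.
apply: eq_big_seq => r; rewrite mem_rgs_seqs => /andP[/eqP size_r /eqP r_rgs].
rewrite mulr_natr -(card_rgs_fiber d size_r r_rgs) -sumr_const.
by apply: eq_bigl => x; rewrite inE eq_sym.
Qed.

Definition Oplus_wt (d w : nat) : int := 1 + (- d%:Z) ^+ w.-1.

Definition Qweight d A B (r : seq nat) : int :=
  Oplus_wt d (wt_at r A) * Oplus_wt d (wt_at r B).

Lemma Oplus_natseq n d (x : {ffun 'I_n.+1 -> 'I_d}) a b c :
  (a <= n)%N -> (b <= n)%N -> (c <= n)%N ->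
  Oplus (x (inord a)) (x (inord b)) (x (inord c)) = Oplus_wt d (wt_at (natseq x) (a, b, c)).
Proof. by move=> *; rewrite /wt_at /= !nth_natseq_inord. Qed.

Lemma ktrace_Wperm_diag t d (pi : {perm 'I_t}) (q : {ffun 'I_t -> 'I_d} -> int) :
  ktrace (kmul (@Wperm t d pi) (Qop q)) =
  \sum_(x : {ffun 'I_t -> 'I_d}) (x == [ffun i => x ((pi^-1)%g i)])%:R * q x.
Proof.
apply: eq_bigr => x _; rewrite /kmul /Qop /kdiag (bigD1 x) //= eqxx mul1r.
by rewrite big1 ?addr0 // => z z_x; rewrite (negbTE z_x) mul0r mulr0.
Qed.

Lemma relabel_invariant_trace t d A B l :
  positions_lt t A -> positions_lt t B -> perm_eq l (iota 0 t) ->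
  relabel_invariant t (fun r => (fixed_by l r)%:R * Qweight d A B r).
Proof.
move=> A_lt B_lt l_perm r f size_r inj_f.
by rewrite /Qweight !wt_at_map ?size_r // fixed_by_map ?size_r.
Qed.

(* Coefficient lists over [Z] (constant term first), kept as plain lists so
   that [vm_compute] can decide positivity certificates. *)
Section CoefficientLists.
Local Open Scope Z_scope.

Fixpoint zpadd (p q : seq Z) : seq Z :=
  match p, q with
  | [::], _ => q
  | _, [::] => p
  | a :: p', b :: q' => a + b :: zpadd p' q'
  end.

Definition zpscale (c : Z) (p : seq Z) : seq Z := map (Z.mul c) p.

Fixpoint zpmul (p q : seq Z) : seq Z :=
  if p is a :: p' then zpadd (zpscale a q) (0 :: zpmul p' q) else [::].

Fixpoint zpshift2 (p : seq Z) : seq Z :=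
  if p is c :: p' then zpadd [:: c] (zpmul [:: 2; 1] (zpshift2 p')) else [::].

Definition zpos_coefs (p : seq Z) : bool :=
  (0 <? head 0 p) && all (Z.leb 0) p.

End CoefficientLists.

Definition zpeval (p : seq Z) (x : int) : int :=
  foldr (fun c acc => int_of_Z c + x * acc) 0 p.

Lemma zpevalD p q x : zpeval (zpadd p q) x = zpeval p x + zpeval q x.
Proof.
elim: p q => [|a p IHp] [|b q] /=; rewrite ?add0r ?addr0 //.
by rewrite (raddfD int_of_Z) IHp; ring.
Qed.

Lemma zpevalZ c p x : zpeval (zpscale c p) x = int_of_Z c * zpeval p x.
Proof. by elim: p => [|a p IHp] /=; rewrite ?mulr0 // (rmorphM int_of_Z) IHp; ring. Qed.

Lemma zpevalM p q x : zpeval (zpmul p q) x = zpeval p x * zpeval q x.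
Proof.
elim: p => [|a p IHp]; first by rewrite /= mul0r.
by rewrite [zpmul _ _]/= zpevalD zpevalZ /= IHp; ring.
Qed.

Lemma zpeval_shift2 p x : zpeval (zpshift2 p) x = zpeval p (x + 2).
Proof.
elim: p => [|a p IHp] //.
rewrite -[zpshift2 _]/(zpadd [:: a] (zpmul _ (zpshift2 p))).
rewrite zpevalD zpevalM IHp -[zpeval [:: _; _] x]/(2 + x * (1 + x * 0)) /=.
ring.
Qed.

Lemma int_of_Z_ge0 c : Z.leb Z0 c -> 0 <= int_of_Z c.
Proof. by case: c. Qed.

Lemma int_of_Z_of_nat k : int_of_Z (Z.of_nat k) = k%:Z.
Proof. by case: k => //= k; rewrite SuccNat2Pos.id_succ. Qed.

Lemma int_of_Z_gt0 c : Z.ltb Z0 c -> 0 < int_of_Z c.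
Proof. by case: c => //= p _; rewrite ltz_nat; exact/ssrnat.ltP/Pos2Nat.is_pos. Qed.

Lemma zpeval_ge0 p x : all (Z.leb Z0) p -> 0 <= x -> 0 <= zpeval p x.
Proof.
elim: p => [|a p IHp] //= /andP[a_ge0 p_ge0] x_ge0.
by rewrite addr_ge0 ?int_of_Z_ge0 // mulr_ge0 // IHp.
Qed.

Lemma zpeval_gt0 p x : zpos_coefs p -> 0 <= x -> 0 < zpeval p x.
Proof.
case: p => [|a p] //= /andP[a_gt0 /andP[_ p_ge0]] x_ge0.
by rewrite ltr_wpDr ?int_of_Z_gt0 // mulr_ge0 // zpeval_ge0.
Qed.

Section TracePolynomial.
Local Open Scope Z_scope.

Definition Oplus_wt_zpoly (w : nat) : seq Z :=
  zpadd [:: 1] (rcons (nseq w.-1 0) (if odd w.-1 then -1 else 1)).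

Fixpoint ffact_zpoly (k : nat) : seq Z :=
  if k is k'.+1 then zpmul (ffact_zpoly k') [:: - Z.of_nat k'; 1] else [:: 1].

Definition pattern_zpoly (A B : nat * nat * nat) (r : seq nat) : seq Z :=
  zpmul (zpmul (Oplus_wt_zpoly (wt_at r A)) (Oplus_wt_zpoly (wt_at r B)))
        (ffact_zpoly (size (undup r))).

Definition trace_zpoly A B (R : seq (seq nat)) (l : seq nat) : seq Z :=
  foldr (fun r p => if fixed_by l r then zpadd (pattern_zpoly A B r) p else p) [::] R.

Definition trace_certificate t A B : bool :=
  let R := rgs_seqs t in
  all (fun l => zpos_coefs (zpshift2 (trace_zpoly A B R l))) (permutations (iota 0 t)).

End TracePolynomial.

Lemma zpeval_Oplus_wt d w : zpeval (Oplus_wt_zpoly w) d%:Z = Oplus_wt d w.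
Proof.
have zpeval_rcons0 n c x : zpeval (rcons (nseq n Z0) c) x = int_of_Z c * x ^+ n.
  by elim: n => [|n IHn] /=; rewrite ?IHn ?exprS; ring.
by rewrite zpevalD zpeval_rcons0 /Oplus_wt /= mulr0 addr0 exprNn -signr_odd; case: odd.
Qed.

Lemma zpeval_ffact d k : zpeval (ffact_zpoly k) d%:Z = (d ^_ k)%:R.
Proof.
elim: k => [|k IHk]; first by rewrite /= mulr0 addr0.
rewrite [ffact_zpoly _]/= zpevalM IHk /= (raddfN int_of_Z) /= int_of_Z_of_nat ffactnSr natrM.
rewrite -[Posz (Pos.to_nat 1)]/(1 : int) mulr0 addr0 mulr1.
have [le_kd | lt_dk] := leqP k d; last by rewrite ffact_small // !mul0r.
by rewrite natrB // !natz addrC.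
Qed.

Lemma zpeval_trace d A B R l :
  zpeval (trace_zpoly A B R l) d%:Z =
  \sum_(r <- R) (fixed_by l r)%:R * Qweight d A B r * (d ^_ size (undup r))%:R.
Proof.
elim: R => [|r R IHR]; first by rewrite big_nil.
rewrite big_cons /= -IHR; case: fixed_by; last by rewrite !mul0r add0r.
by rewrite zpevalD !zpevalM !zpeval_Oplus_wt zpeval_ffact mul1r.
Qed.

Lemma ktrace_Wperm_Qweight t d A B (pi : {perm 'I_t}) (q : {ffun 'I_t -> 'I_d} -> int) :
  positions_lt t A -> positions_lt t B -> (forall x, q x = Qweight d A B (natseq x)) ->
  ktrace (kmul (@Wperm t d pi) (Qop q)) =
  zpeval (trace_zpoly A B (rgs_seqs t) (perm_natseq pi)) d%:Z.
Proof.
move=> A_lt B_lt q_weight; rewrite ktrace_Wperm_diag zpeval_trace.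
under eq_bigr do rewrite fixed_by_natseq q_weight.
apply: (@sum_ffun_rgs t d (fun r => (fixed_by (perm_natseq pi) r)%:R * Qweight d A B r)).
exact/relabel_invariant_trace/perm_natseq_perm_eq.
Qed.

Lemma class_sums_pos_of_traces t (q : forall d, {ffun 'I_t -> 'I_d} -> int) :
  (forall d (pi : {perm 'I_t}),
     (2 <= d)%N -> 0 < ktrace (kmul (@Wperm t d pi) (Qop (q d)))) ->
  class_sums_eventually_pos q.
Proof.
move=> trace_gt0; exists 2%N => d _ le2d _ /imsetP[pi _ ->].
rewrite (bigD1 pi) ?class_refl //= ltr_wpDr ?trace_gt0 // sumr_ge0 // => pi' _.
by rewrite ltW ?trace_gt0.
Qed.

Lemma class_sums_pos_of_certificate t A B (q : forall d, {ffun 'I_t -> 'I_d} -> int) :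
  positions_lt t A -> positions_lt t B -> trace_certificate t A B ->
  (forall d x, q d x = Qweight d A B (natseq x)) -> class_sums_eventually_pos q.
Proof.
move=> A_lt B_lt cert q_weight; apply: class_sums_pos_of_traces => d pi le2d.
rewrite (ktrace_Wperm_Qweight _ A_lt B_lt (q_weight d)) -[d%:Z](subrK 2) -zpeval_shift2.
apply: zpeval_gt0; last by rewrite subr_ge0 lez_nat.
by apply: (allP cert); rewrite mem_permutations perm_natseq_perm_eq.
Qed.

Lemma trace_certificate_q3 : trace_certificate 3 (0, 1, 2)%N (0, 1, 2)%N.
Proof. by vm_compute. Qed.

Lemma trace_certificate_q4 : trace_certificate 4 (0, 1, 2)%N (0, 1, 3)%N.
Proof. by vm_compute. Qed.

Lemma trace_certificate_q5 : trace_certificate 5 (0, 1, 2)%N (0, 3, 4)%N.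
Proof. by vm_compute. Qed.

Lemma trace_certificate_q6 : trace_certificate 6 (0, 1, 2)%N (3, 4, 5)%N.
Proof. by vm_compute. Qed.

Theorem proposition14 :
  class_sums_eventually_pos q3 /\ class_sums_eventually_pos q4 /\
  class_sums_eventually_pos q5 /\ class_sums_eventually_pos q6.
Proof.
split; [|split; [|split]].
- apply: (class_sums_pos_of_certificate _ _ trace_certificate_q3) => // d x.
  by rewrite /q3 /ent /= expr2 !Oplus_natseq.
- apply: (class_sums_pos_of_certificate _ _ trace_certificate_q4) => // d x.
  by rewrite /q4 /ent /= !Oplus_natseq.
- apply: (class_sums_pos_of_certificate _ _ trace_certificate_q5) => // d x.
  by rewrite /q5 /ent /= !Oplus_natseq.
- apply: (class_sums_pos_of_certificate _ _ trace_certificate_q6) => // d x.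
  by rewrite /q6 /ent /= !Oplus_natseq.
Qed.
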